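(* Let $\{G_i\}$ be a family of connected graphs with common induced subgraph $J$, embedded as $J_i\subseteq G_i$, such that $\{(G_i|J_i)\}$ is isometric, and let $H=\amalg\{(G_i|J_i)\}$. Let $uv\in Solv(J_i:G_i)$ with $d(u,J)<d(v,J)$, and let $c\in V(J)$ with $d(u,c)=d(u,J)$. Then $c$ distinguishes $uv$. Moreover, if for some $j\neq i$ there exists $s\in V(G_j)$ with $d(s,c)=d(s,J)$, then $s$ distinguishes $uv$.
   Context: All distances $d$ are shortest-path distances in $H$, and $d(x,J)=\min_{w\in V(J)}d(x,w)$. A vertex $w$ distinguishes an edge $uv$ if $d(w,u)\neq d(w,v)$. $J$ is a common induced subgraph of each $G_i$ via injective maps $\iota_i:V(J)\to V(G_i)$ with $\iota_i(x)\iota_i(y)\in E(G_i)$ iff $xy\in E(J)$; $J_i$ is the induced image, $x^i=\iota_i(x)$. $H=\amalg\{(G_i|J_i)\}$ is obtained from the disjoint union of the $G_i$ by identifying, for each $x\in V(J)$, all $x^i$ into one vertex; $G_i$ and $J$ are regarded as subgraphs of $H$. The family is isometric if $d_{G_i}(a^i,b^i)=d_{G_j}(a^j,b^j)$ for all $i,j$, $a,b\in V(J)$. $Solv(J_i:G_i)$ is the set of edges $uv$ of $G_i$ with $d(u,J)\neq d(v,J)$. *)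

From mathcomp Require Import all_boot.
Set Implicit Arguments. Unset Strict Implicit. Unset Printing Implicit Defensive.

Definition walkn (T : finType) (e : rel T) (n : nat) (x y : T) : bool :=
  [exists p : n.-tuple T, path e x p && (last x p == y)].

(* Shortest-path distance: the least n <= #|T| admitting a walk of length n
   (equals #|T| only when y is unreachable from x). *)
Definition dist (T : finType) (e : rel T) (x y : T) : nat :=
  find (fun n => walkn e n x y) (iota 0 #|T|).

Definition connected_graph (T : finType) (e : rel T) : Prop :=
  forall x y : T, connect e x y.

Definition simple_graph (T : finType) (e : rel T) : Prop :=
  symmetric e /\ irreflexive e.

Section Amalgam.
Variables (I : finType) (V : I -> finType) (e : forall i, rel (V i)).
Variables (VJ : finType) (eJ : rel VJ) (iota : forall i, VJ -> V i).

Definition induced_embedding (i : I) : Prop :=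
  injective (iota i) /\ forall a b : VJ, e (iota i a) (iota i b) = eJ a b.

Definition isometric_family : Prop :=
  forall (i j : I) (a b : VJ),
    dist (@e i) (iota i a) (iota i b) = dist (@e j) (iota j a) (iota j b).

(* Vertices of H = amalgam: the vertices of J, plus for each i the vertices
   of G_i outside J_i. *)
Definition outside (i : I) := {y : V i | y \notin codom (iota i)}.
Definition HV : finType := (VJ + {i : I & outside i})%type.

(* The canonical image in H of a vertex of G_i (x^i is identified with x). *)
Definition emb (i : I) (x : V i) : HV :=
  match (x \in codom (iota i)) as b return (x \in codom (iota i)) = b -> HV with
  | true => fun h => inl (iinv h)
  | false => fun h => inr (Tagged outside (exist _ x (negbT h) : outside i))
  end erefl.

Definition hedge : rel HV := fun a b =>
  [exists i : I, exists x : V i, exists y : V i,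
     [&& emb x == a, emb y == b & e x y]].

Definition dH (a b : HV) : nat := dist hedge a b.

Definition dHJ (a : HV) : nat := \big[minn/#|HV|]_(w : VJ) dH a (inl w).

Definition distinguishes (w a b : HV) : bool := dH w a != dH w b.

Definition Solv (i : I) (u v : V i) : bool :=
  e u v && (dHJ (emb u) != dHJ (emb v)).

End Amalgam.

Arguments hedge {I V} e {VJ} iota a b.
Arguments dH {I V} e {VJ} iota a b.
Arguments dHJ {I V} e {VJ} iota a.
Arguments distinguishes {I V} e {VJ} iota w a b.
Arguments Solv {I V} e {VJ} iota {i} u v.
Arguments emb {I V VJ} iota {i} x.

(* A walk in H from a vertex outside G_i to a vertex of G_i \ J_i must pass
   through J, so for such s and v we get d(s,v) >= d(s,J) + d(v,J).  On the
   other hand d(s,u) <= d(s,c) + d(c,u) = d(s,J) + d(u,J) when d(s,c) = d(s,J),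
   and d(u,J) < d(v,J) makes s strictly closer to u than to v.  For c itself,
   d(c,u) = d(u,J) < d(v,J) <= d(c,v). *)
From Pilot Require Import Defs.
From mathcomp Require Import all_boot.
Set Implicit Arguments. Unset Strict Implicit. Unset Printing Implicit Defensive.

Lemma bigmin_le_seq (T : eqType) (r : seq T) (F : T -> nat) m x :
  x \in r -> \big[minn/m]_(y <- r) F y <= F x.
Proof.
elim: r => // y r IH; rewrite inE big_cons => /predU1P[<-|/IH]; first exact: geq_minl.
exact/leq_trans/geq_minr.
Qed.

Section Distance.
Variables (T : finType) (e : rel T).

Definition walk (n : nat) (x y : T) : Prop :=
  exists p : seq T, [/\ size p = n, path e x p & last x p = y].

Lemma walknP n x y : reflect (walk n x y) (walkn e n x y).
Proof.
apply: (iffP existsP) => [[t /andP[ep /eqP lp]] | [p [sp ep lp]]].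
  by exists (val t); rewrite size_tuple.
have sp' : size p == n by rewrite sp.
by exists (Tuple sp'); rewrite /= ep lp eqxx.
Qed.

Lemma walk0 x : walk 0 x x.
Proof. by exists [::]. Qed.

Lemma walk_cat m n x y z : walk m x y -> walk n y z -> walk (m + n) x z.
Proof.
case=> p [<- ep lp] [q [<- eq lq]].
by exists (p ++ q); rewrite size_cat cat_path last_cat lp ep eq lq.
Qed.

Lemma dist_min n x y : walk n x y -> dist e x y <= n.
Proof.
move=> /walknP wn; rewrite /dist; case: (ltnP n #|T|) => n_lt.
  by rewrite leqNgt; apply/negP => /(before_find 0); rewrite nth_iota // add0n wn.
by apply: leq_trans (find_size _ _) _; rewrite size_iota.
Qed.

Lemma dist_lt_card x y : connect e x y -> dist e x y < #|T|.
Proof.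
case/connectP=> p ep ->; case: (shortenP ep) => q eq uq _.
apply: (@leq_ltn_trans (size q)); first by apply: dist_min; exists q.
by have := max_card (mem (x :: q)); rewrite (card_uniqP uq).
Qed.

Lemma dist_walk x y : connect e x y -> walk (dist e x y) x y.
Proof.
move=> /dist_lt_card lt_card; apply/walknP.
have has_walk : has (fun n => walkn e n x y) (iota 0 #|T|) by rewrite has_find size_iota.
by have := nth_find 0 has_walk; rewrite nth_iota.
Qed.

Lemma dist_xx x : dist e x x = 0.
Proof. by apply/eqP; rewrite -leqn0; apply/dist_min/walk0. Qed.

Lemma dist_triangle x y z : connect e x y -> connect e y z ->
  dist e x z <= dist e x y + dist e y z.
Proof. by move=> /dist_walk wxy /dist_walk wyz; apply/dist_min/(walk_cat wxy wyz). Qed.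

Hypothesis e_sym : symmetric e.

Lemma walk_sym n x y : walk n x y -> walk n y x.
Proof.
case=> p [sp ep lp]; exists (rev (belast x p)); split.
- by rewrite size_rev size_belast.
- by rewrite -lp rev_path (eq_path (e' := e)).
- have : last x (rev (x :: p)) = x by rewrite rev_cons last_rcons.
  by rewrite lastI rev_rcons /= lp.
Qed.

Lemma dist_sym x y : dist e x y = dist e y x.
Proof. by apply: eq_find => n; apply/walknP/walknP => /walk_sym. Qed.

End Distance.

Section Amalgam.
Variables (I : finType) (V : I -> finType) (e : forall i, rel (V i)).
Variables (VJ : finType) (iota : forall i, VJ -> V i).

Local Notation HV := (HV iota).
Local Notation hedge := (hedge e iota).
Local Notation emb := (emb iota).
Local Notation dH := (dH e iota).
Local Notation dHJ := (dHJ e iota).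

Definition part (a : HV) : option I :=
  if a is inr t then Some (tag t) else None.

Variant emb_spec i (x : V i) : HV -> Type :=
  | EmbJ w of iota i w = x : emb_spec x (inl w)
  | EmbOut (h : x \notin codom (iota i)) :
      emb_spec x (inr (Tagged (outside iota) (exist _ x h : outside iota i))).

Lemma embP i (x : V i) : emb_spec x (emb x).
Proof.
rewrite /Defs.emb; move: (erefl (x \in codom (iota i))).
by case: {2 3}(x \in codom (iota i)) => h; constructor; rewrite ?f_iinv.
Qed.

Lemma emb_iota i w : injective (iota i) -> emb (iota i w) = inl w.
Proof.
move=> inj_i; case: embP => [w' /inj_i -> // | h].
by have := h; rewrite codom_f.
Qed.

Lemma part_emb_neq i j (x : V j) : j != i -> part (emb x) != Some i.
Proof. by move=> ji; case: embP => //= h; apply: contra ji => /eqP[->]. Qed.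

Lemma hedge_emb i (x y : V i) : e x y -> hedge (emb x) (emb y).
Proof.
by move=> exy; apply/existsP; exists i; apply/existsP; exists x; apply/existsP; exists y;
  rewrite !eqxx exy.
Qed.

Lemma hedge_part a b : hedge a b ->
  part a = None \/ part b = None \/ part a = part b.
Proof.
case/existsP=> k /existsP[x /existsP[y /and3P[/eqP <- /eqP <- _]]].
by case: embP => [w _|hx]; [left | case: embP => [w _|hy]; right; [left | right]].
Qed.

Lemma hedge_sym : (forall i, symmetric (@e i)) -> symmetric hedge.
Proof.
move=> e_sym a b; apply/idP/idP;
by case/existsP=> k /existsP[x /existsP[y /and3P[/eqP <- /eqP <- exy]]];
  apply: hedge_emb; rewrite e_sym.
Qed.

Lemma connect_emb i (x y : V i) : connect (@e i) x y -> connect hedge (emb x) (emb y).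
Proof.
case/connectP=> p ep ->; apply/connectP; exists (map emb p); last by rewrite last_map.
by elim: p x ep => //= z p IH x /andP[exz ep]; rewrite hedge_emb //= IH.
Qed.

Lemma walk_split_J i n a b : walk hedge n a b -> part a != Some i -> part b = Some i ->
  exists w n1 n2, [/\ n1 + n2 = n, walk hedge n1 a (inl w) & walk hedge n2 (inl w) b].
Proof.
case=> p [<- ep lp]; elim: p a ep lp => [|z p IH] a /=; first by move=> _ -> /eqP b_i /b_i.
case: a => [w | t].
- move=> /andP[ewz ep] lp _ _; exists w, 0, (size p).+1; split => //; first exact: walk0.
  by exists (z :: p); rewrite /= ewz ep lp.
- move=> /andP[etz ep] lp t_i b_i.
  have z_i : part z != Some i by case: (hedge_part etz) => [|[|<-]] // ->.
  have [w [n1 [n2 [<- w1 w2]]]] := IH z ep lp z_i b_i.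
  exists w, n1.+1, n2; split => //.
  by apply: (walk_cat (m := 1)) w1; exists [:: z]; rewrite /= etz.
Qed.

Lemma dHJ_le_dH a w : dHJ a <= dH a (inl w).
Proof. exact: bigmin_le_seq (mem_index_enum w). Qed.

Lemma dHJ_gt0_part i (x : V i) : 0 < dHJ (emb x) -> part (emb x) = Some i.
Proof.
case: embP => //= w _; have := dHJ_le_dH (inl w) w.
by rewrite /Defs.dH dist_xx leqn0 => /eqP ->.
Qed.

Hypothesis e_sym : forall i, symmetric (@e i).

Lemma dH_sym a b : dH a b = dH b a.
Proof. exact/dist_sym/hedge_sym. Qed.

Lemma dHJ_add_le_dH i a b : connect hedge a b -> part a != Some i -> part b = Some i ->
  dHJ a + dHJ b <= dH a b.
Proof.
move=> /dist_walk wab a_i b_i; rewrite /Defs.dH.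
have [w [n1 [n2 [<- w1 w2]]]] := walk_split_J wab a_i b_i.
apply: leq_add; first exact/(leq_trans (dHJ_le_dH a w))/dist_min.
by apply: leq_trans (dHJ_le_dH b w) _; rewrite dH_sym; apply: dist_min.
Qed.

Hypothesis e_connected : forall i, connected_graph (@e i).
Hypothesis iota_inj : forall i, injective (iota i).

Lemma connect_emb_J i (x : V i) w : connect hedge (emb x) (inl w).
Proof. by rewrite -(emb_iota w (@iota_inj i)); apply/connect_emb/e_connected. Qed.

Lemma connect_J_emb w i (x : V i) : connect hedge (inl w) (emb x).
Proof. by rewrite (sym_connect_sym (hedge_sym e_sym)) connect_emb_J. Qed.

Lemma dH_triangle_J j k (x : V j) w (y : V k) :
  dH (emb x) (emb y) <= dH (emb x) (inl w) + dH (inl w) (emb y).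
Proof. exact: dist_triangle (connect_emb_J x w) (connect_J_emb w y). Qed.

Lemma dHJ_add_le_dH_emb i j (x : V j) (w : VJ) (y : V i) : j != i -> 0 < dHJ (emb y) ->
  dHJ (emb x) + dHJ (emb y) <= dH (emb x) (emb y).
Proof.
move=> ji /dHJ_gt0_part y_i; apply: dHJ_add_le_dH (part_emb_neq x ji) y_i.
exact: connect_trans (connect_emb_J x w) (connect_J_emb w y).
Qed.

End Amalgam.

Theorem lemma11 (I : finType) (V : I -> finType) (e : forall i, rel (V i))
  (VJ : finType) (eJ : rel VJ) (iota : forall i, VJ -> V i)
  (Hsimple : forall i, simple_graph (@e i))
  (Hconn : forall i, connected_graph (@e i))
  (Hind : forall i, induced_embedding e eJ iota i)
  (Hiso : isometric_family e iota)
  (i : I) (u v : V i)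
  (Huv : Solv e iota u v)
  (Hlt : dHJ e iota (emb iota u) < dHJ e iota (emb iota v))
  (c : VJ)
  (Hc : dH e iota (emb iota u) (inl c) = dHJ e iota (emb iota u)) :
  distinguishes e iota (inl c) (emb iota u) (emb iota v) /\
  (forall (j : I), j != i -> forall s : V j,
     dH e iota (emb iota s) (inl c) = dHJ e iota (emb iota s) ->
     distinguishes e iota (emb iota s) (emb iota u) (emb iota v)).
Proof.
have e_sym k : symmetric (@e k) by case: (Hsimple k).
have iota_inj k : injective (iota k) by case: (Hind k).
split.
  rewrite /distinguishes !(dH_sym e_sym (inl c)) Hc ltn_eqF //.
  exact: leq_trans Hlt (dHJ_le_dH _ _ c).
move=> j ji s Hs; rewrite /distinguishes neq_ltn.
rewrite (leq_ltn_trans (dH_triangle_J e_sym Hconn iota_inj s c u)) //.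
rewrite Hs dH_sym // Hc.
apply: leq_trans (dHJ_add_le_dH_emb e_sym Hconn iota_inj s c ji (leq_trans _ Hlt)) => //.
by rewrite ltn_add2l.
Qed.
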